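(* Let $\alpha>0$ and define $\phi:[0,\infty)\to\mathbb{R}$ by $\phi(t)=e^{-\alpha\left(1+\tan\frac{\pi}{2}t^{2}\right)^{2}}$ for $0\le t<1$ and $\phi(t)=0$ for $t\ge 1$. For each integer $j\ge 1$, let $F_j(\alpha,u)$ be the polynomial in $\alpha,u$ with integer coefficients determined by $$\frac{d^{j}}{dt^{j}}\phi(\sqrt{t})=e^{-\alpha(1+u)^{2}}(-1)^{j}\alpha\left(\frac{\pi}{2}\right)^{j}(1+u^{2})\,F_{j}(\alpha,u),\qquad u=\tan\frac{\pi}{2}t,\quad 0<t<1,$$ valid for all $\alpha>0$. Then for each $j\ge 1$ there exists a number $\alpha_j>0$ such that $F_j(\alpha,u)\ge 0$ for all $\alpha\ge\alpha_j$ and all $u\ge 0$.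
   Context: For example, $F_1(\alpha,u)=2u+2$ and $F_2(\alpha,u)=4\alpha(1+u)^2(1+u^2)-2(1+u^2)-4(1+u)u$. The paper asserts that $F_j(\alpha,u)=a_j\alpha^{j-1}u^{3(j-1)+1}+\sum_{k=0}^{j-2}\sum_{l=0}^{3j-3}a_{kl}\alpha^k u^l$ with $a_j$ a positive integer and $a_{kl}$ integers. *)

From Stdlib Require Import Reals ZArith.
From Coquelicot Require Import Coquelicot.
Open Scope R_scope.

(* phi(t) = exp(-alpha (1 + tan(pi/2 t^2))^2) for t < 1, and 0 for t >= 1.
   (Only t >= 0 matters; the formula is also used for t < 0.) *)
Definition phi (alpha t : R) : R :=
  if Rlt_dec t 1 then exp (- alpha * (1 + tan (PI / 2 * t ^ 2)) ^ 2) else 0.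

Definition poly2_eval (d : nat) (c : nat -> nat -> Z) (a u : R) : R :=
  sum_f_R0 (fun k => sum_f_R0 (fun l => IZR (c k l) * a ^ k * u ^ l) d) d.

(* Put u = tan (pi t / 2).  Differentiating e^(-al (1+u)^2) (1+u^2) h(u) in t gives
   -(pi/2) e^(-al (1+u)^2) (1+u^2) (Fstep al h)(u), where
   Fstep al h = (2 al (1+u)(1+u^2) - 2u) h - (1+u^2) h'.  So the derivatives of
   phi(sqrt t) are governed by the iterates of Fstep al started at F_1 = 2 + 2u, and the
   hypothesised formula identifies F_j with them for u > 0.
   If h >= c X (1+u)^n on u >= 0, its coefficients are O(X) and its degree is <= n + 1, then
   the term 2 al (1+u)(1+u^2) h >= al c X (1+u)^(n+3) of Fstep al h dominates the other two,
   which are O(X (1+u)^(n+3)); for al large, Fstep al h >= (c/2) al X (1+u)^(n+3).  Hence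
   F_j > 0 for u > 0 once al is large, and F_j >= 0 at u = 0 by continuity. *)

From Stdlib Require Import Reals ZArith Lia Lra List.
From Coquelicot Require Import Coquelicot.
Import ListNotations.
Open Scope R_scope.

Fixpoint peval (p : list R) (u : R) : R :=
  match p with [] => 0 | a :: p' => a + u * peval p' u end.

Fixpoint padd (p q : list R) : list R :=
  match p, q with
  | [], _ => q
  | _, [] => p
  | a :: p', b :: q' => (a + b) :: padd p' q'
  end.

Definition pscale (a : R) (p : list R) : list R := map (Rmult a) p.

Fixpoint pmul (q p : list R) : list R :=
  match q with [] => [] | a :: q' => padd (pscale a p) (0 :: pmul q' p) end.

Fixpoint pderiv (p : list R) : list R :=
  match p with [] => [] | _ :: p' => padd p' (0 :: pderiv p') end.

Lemma peval_padd p q u : peval (padd p q) u = peval p u + peval q u.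
Proof.
  revert q; induction p as [|a p IH]; intros [|b q]; simpl; try ring.
  rewrite IH; ring.
Qed.

Lemma peval_pscale a p u : peval (pscale a p) u = a * peval p u.
Proof. induction p as [|b p IH]; simpl; [ring|]. rewrite IH; ring. Qed.

Lemma peval_pmul q p u : peval (pmul q p) u = peval q u * peval p u.
Proof.
  induction q as [|a q IH]; simpl; [ring|].
  rewrite peval_padd, peval_pscale; simpl; rewrite IH; ring.
Qed.

Lemma is_derive_peval p u : is_derive (peval p) u (peval (pderiv p) u).
Proof.
  apply is_derive_Reals; revert u; induction p as [|a p IH]; intros u; simpl.
  - apply derivable_pt_lim_const.
  - rewrite peval_padd; simpl.
    replace (peval p u + (0 + u * peval (pderiv p) u))
      with (0 + (1 * peval p u + u * peval (pderiv p) u)) by ring.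
    apply (derivable_pt_lim_plus (fct_cte a) (id * peval p)%F).
    + apply derivable_pt_lim_const.
    + apply derivable_pt_lim_mult; [apply derivable_pt_lim_id|apply IH].
Qed.

Lemma length_padd p q : length (padd p q) = Nat.max (length p) (length q).
Proof. revert q; induction p as [|a p IH]; intros [|b q]; simpl; auto. Qed.

Lemma length_pmul q p n :
  (length p <= S n)%nat -> (length (pmul q p) <= length q + n)%nat.
Proof.
  intros Hp; induction q as [|a q IH]; simpl; [lia|].
  rewrite length_padd; unfold pscale; rewrite length_map; simpl; lia.
Qed.

Lemma length_pderiv p : (length (pderiv p) <= length p)%nat.
Proof. induction p as [|a p IH]; simpl; [lia|]. rewrite length_padd; simpl; lia. Qed.

Definition coef_bound (p : list R) (B : R) : Prop := List.Forall (fun a => Rabs a <= B) p.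

Lemma coef_bound_weaken p B B' : coef_bound p B -> B <= B' -> coef_bound p B'.
Proof. intros H HB; eapply Forall_impl; [|exact H]; simpl; intros; lra. Qed.

Lemma coef_bound_padd p q B B' :
  0 <= B -> 0 <= B' -> coef_bound p B -> coef_bound q B' -> coef_bound (padd p q) (B + B').
Proof.
  intros HB HB'; revert q; induction p as [|a p IH]; intros [|b q] Hp Hq; simpl.
  - constructor.
  - eapply coef_bound_weaken; [exact Hq|lra].
  - eapply coef_bound_weaken; [exact Hp|lra].
  - inversion Hp; inversion Hq; subst; constructor; [|now apply IH].
    eapply Rle_trans; [apply Rabs_triang|lra].
Qed.

Lemma coef_bound_pscale a p B : coef_bound p B -> coef_bound (pscale a p) (Rabs a * B).
Proof.
  intros H; apply Forall_map; eapply Forall_impl; [|exact H]; simpl; intros x Hx.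
  rewrite Rabs_mult; apply Rmult_le_compat_l; [apply Rabs_pos|exact Hx].
Qed.

Lemma coef_bound_pmul q p Bq B :
  0 <= Bq -> 0 <= B -> coef_bound q Bq -> coef_bound p B ->
  coef_bound (pmul q p) (INR (length q) * Bq * B).
Proof.
  intros HBq HB Hq Hp; induction q as [|a q IH]; [constructor|].
  inversion Hq; subst; cbn [pmul]; change (length (a :: q)) with (S (length q)).
  assert (0 <= INR (length q) * Bq * B) by (apply Rmult_le_pos; [apply Rmult_le_pos|]; auto using pos_INR).
  eapply coef_bound_weaken.
  - apply (coef_bound_padd _ _ (Rabs a * B)); [|exact H|apply coef_bound_pscale, Hp|].
    + apply Rmult_le_pos; [apply Rabs_pos|exact HB].
    + constructor; [rewrite Rabs_R0|apply IH]; assumption.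
  - rewrite S_INR. assert (Rabs a * B <= Bq * B) by (apply Rmult_le_compat_r; auto). nra.
Qed.

Lemma coef_bound_pderiv p B :
  0 <= B -> coef_bound p B -> coef_bound (pderiv p) (INR (length p) * B).
Proof.
  intros HB; induction p as [|a p IH]; intros Hp; [constructor|].
  inversion Hp; subst; cbn [pderiv]; change (length (a :: p)) with (S (length p)).
  assert (0 <= INR (length p) * B) by (apply Rmult_le_pos; auto using pos_INR).
  replace (INR (S (length p)) * B) with (B + INR (length p) * B) by (rewrite S_INR; ring).
  apply coef_bound_padd; auto; constructor; [rewrite Rabs_R0|apply IH]; assumption.
Qed.

Lemma Rabs_peval_le p B u m :
  0 <= B -> 0 <= u -> coef_bound p B -> (length p <= m)%nat ->
  Rabs (peval p u) <= B * (1 + u) ^ m.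
Proof.
  intros HB Hu Hp Hm.
  apply Rle_trans with (B * (1 + u) ^ length p);
    [|apply Rmult_le_compat_l, Rle_pow; auto; lra].
  induction p as [|a p IH]; simpl.
  - rewrite Rabs_R0; lra.
  - inversion Hp; subst; simpl in Hm; specialize (IH H2 ltac:(lia)).
    eapply Rle_trans; [apply Rabs_triang|].
    rewrite Rabs_mult, (Rabs_right u) by lra.
    assert (1 <= (1 + u) ^ length p) by (apply pow_R1_Rle; lra).
    assert (u * Rabs (peval p u) <= u * (B * (1 + u) ^ length p)) by (apply Rmult_le_compat_l; lra).
    nra.
Qed.

Definition Fstep (al : R) (h : list R) : list R :=
  padd (pmul [2 * al; 2 * al - 2; 2 * al; 2 * al] h) (pmul [-1; 0; -1] (pderiv h)).

Lemma peval_Fstep al h u :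
  peval (Fstep al h) u =
  (2 * al * (1 + u) * (1 + u ^ 2) - 2 * u) * peval h u - (1 + u ^ 2) * peval (pderiv h) u.
Proof. unfold Fstep; rewrite peval_padd, !peval_pmul; simpl; ring. Qed.

Lemma is_derive_Fstep al h u :
  is_derive (fun v => exp (- al * (1 + v) ^ 2) * (1 + v ^ 2) * peval h v) u
    (- (exp (- al * (1 + u) ^ 2) * peval (Fstep al h) u)).
Proof.
  pose proof (is_derive_peval h u) as Dh.
  auto_derive; [eexists; exact Dh|].
  replace (Derive (fun x => peval h x) u) with (peval (pderiv h) u)
    by (symmetry; apply is_derive_unique, Dh).
  rewrite peval_Fstep; simpl pow; ring.
Qed.

(* [Fpoly al j] is the coefficient list in u of the paper's F_(j+1)(al, u). *)
Fixpoint Fpoly (al : R) (j : nat) : list R :=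
  match j with O => [2; 2] | S j => Fstep al (Fpoly al j) end.

Definition growth_bounds (n : nat) (X B c : R) (h : list R) : Prop :=
  coef_bound h (B * X) /\ (length h <= S n)%nat /\
  forall u, 0 <= u -> c * X * (1 + u) ^ n <= peval h u.

Lemma length_Fstep al h n :
  (length h <= S n)%nat -> (length (Fstep al h) <= S (n + 3))%nat.
Proof.
  intros Hh; unfold Fstep; rewrite length_padd.
  pose proof (length_pmul [2 * al; 2 * al - 2; 2 * al; 2 * al] _ _ Hh).
  pose proof (length_pmul [-1; 0; -1] (pderiv h) n (Nat.le_trans _ _ _ (length_pderiv h) Hh)).
  simpl length in *; lia.
Qed.

Lemma coef_bound_Fstep al h n X B :
  1 <= al -> 0 <= X -> 0 <= B -> coef_bound h (B * X) -> (length h <= S n)%nat ->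
  coef_bound (Fstep al h) ((3 * INR n + 11) * B * (al * X)).
Proof.
  intros Hal HX HB Hh Hlen.
  assert (HBX : 0 <= B * X) by (apply Rmult_le_pos; lra).
  assert (Hq1 : coef_bound [2 * al; 2 * al - 2; 2 * al; 2 * al] (2 * al))
    by (repeat apply List.Forall_cons; try apply List.Forall_nil; rewrite Rabs_right; lra).
  assert (Hq2 : coef_bound [-1; 0; -1] 1)
    by (repeat apply List.Forall_cons; try apply List.Forall_nil; unfold Rabs; destruct Rcase_abs; lra).
  assert (Hd := coef_bound_pderiv h _ HBX Hh).
  assert (0 <= INR (length h)) by apply pos_INR.
  assert (INR (length h) * (B * X) <= INR (S n) * (B * X))
    by (apply Rmult_le_compat_r, le_INR; assumption).
  assert (0 <= INR (S n) * (B * X)) by (apply Rmult_le_pos; auto using pos_INR).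
  eapply coef_bound_weaken.
  - apply coef_bound_padd;
      [| |apply coef_bound_pmul; [| |exact Hq1|exact Hh]
         |apply coef_bound_pmul; [| |exact Hq2|exact Hd]]; simpl length; rewrite ?S_INR, ?INR_0 in *; nra.
  - simpl length; rewrite ?S_INR, ?INR_0 in *; nra.
Qed.

Lemma growth_bounds_Rabs_peval_le n X B c h u :
  0 <= X -> 0 <= B -> 0 <= u -> growth_bounds n X B c h ->
  Rabs (peval h u) <= B * X * (1 + u) ^ S n /\
  Rabs (peval (pderiv h) u) <= (INR n + 1) * B * X * (1 + u) ^ S n.
Proof.
  intros HX HB Hu (Hh & Hlen & _).
  assert (HBX : 0 <= B * X) by (apply Rmult_le_pos; assumption).
  split; [apply Rabs_peval_le; assumption|].
  replace ((INR n + 1) * B * X) with (INR (S n) * (B * X)) by (rewrite S_INR; ring).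
  apply Rabs_peval_le; [apply Rmult_le_pos; auto using pos_INR|exact Hu| |].
  - eapply coef_bound_weaken; [apply coef_bound_pderiv; eassumption|].
    apply Rmult_le_compat_r, le_INR; assumption.
  - exact (Nat.le_trans _ _ _ (length_pderiv h) Hlen).
Qed.

Lemma one_plus_cube_le u : 0 <= u -> (1 + u) ^ 3 <= 2 * ((1 + u) * (1 + u ^ 2)).
Proof.
  intros Hu; assert (0 <= (1 + u) * ((1 - u) * (1 - u))) by (apply Rmult_le_pos; [lra|apply Rle_0_sqr]).
  simpl pow; nra.
Qed.

Lemma Fstep_lower_bound al n X B c h :
  0 <= al -> 0 <= X -> 0 <= B -> 0 < c -> INR (n + 3) * B <= al * c / 2 ->
  growth_bounds n X B c h ->
  forall u, 0 <= u -> c / 2 * (al * X) * (1 + u) ^ (n + 3) <= peval (Fstep al h) u.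
Proof.
  intros Hal HX HB Hc Hcond Hh u Hu.
  destruct (growth_bounds_Rabs_peval_le n X B c h u HX HB Hu Hh) as [Hh_le Hd_le].
  pose proof (proj2 (proj2 Hh) u Hu) as Hhv.
  rewrite peval_Fstep, pow_add.
  rewrite plus_INR in Hcond; replace (INR 3) with 3 in Hcond by (simpl; ring).
  change ((1 + u) ^ S n) with ((1 + u) * (1 + u) ^ n) in Hh_le, Hd_le.
  pose proof (one_plus_cube_le u Hu) as Hcube.
  set (w := 1 + u) in *; set (M := X * w ^ n).
  assert (Hw : 1 <= w) by (unfold w; lra).
  assert (HM : 0 <= M) by (apply Rmult_le_pos; [lra|apply pow_le; lra]).
  replace (c * X * w ^ n) with (c * M) in Hhv by (unfold M; ring).
  replace (B * X * (w * w ^ n)) with (B * M * w) in Hh_le by (unfold M; ring).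
  replace ((INR n + 1) * B * X * (w * w ^ n)) with ((INR n + 1) * B * M * w) in Hd_le
    by (unfold M; ring).
  assert (Hlead : al * c * M * w ^ 3 <= 2 * al * (1 + u) * (1 + u ^ 2) * peval h u).
  { assert (w ^ 3 * (c * M) <= 2 * ((1 + u) * (1 + u ^ 2)) * peval h u)
      by (apply Rmult_le_compat; [apply pow_le; lra|nra|exact Hcube|exact Hhv]).
    replace (al * c * M * w ^ 3) with (al * (w ^ 3 * (c * M))) by ring.
    replace (2 * al * (1 + u) * (1 + u ^ 2) * peval h u)
      with (al * (2 * ((1 + u) * (1 + u ^ 2)) * peval h u)) by ring.
    apply Rmult_le_compat_l; assumption. }
  assert (Hdrift : 2 * u * peval h u <= 2 * B * M * w ^ 3).
  { assert (u * peval h u <= w * (B * M * w)).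
    { apply Rmult_le_compat; [lra|nra|unfold w; lra|].
      eapply Rle_trans; [apply Rle_abs|exact Hh_le]. }
    assert (0 <= B * M * w * w) by (apply Rmult_le_pos; [apply Rmult_le_pos|]; nra).
    assert (B * M * w * w <= B * M * w * w * w) by nra.
    simpl pow; nra. }
  assert (Hderiv : (1 + u ^ 2) * peval (pderiv h) u <= (INR n + 1) * B * M * w ^ 3).
  { assert (Hu2 : 0 <= 1 + u ^ 2) by nra.
    apply Rle_trans with ((1 + u ^ 2) * Rabs (peval (pderiv h) u));
      [apply Rmult_le_compat_l; [exact Hu2|apply Rle_abs]|].
    replace ((INR n + 1) * B * M * w ^ 3) with ((w * w) * ((INR n + 1) * B * M * w)) by ring.
    apply Rmult_le_compat; [exact Hu2|apply Rabs_pos|unfold w; nra|exact Hd_le]. }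
  assert (Hw3 : 0 <= M * w ^ 3) by (apply Rmult_le_pos; [lra|apply pow_le; lra]).
  assert ((INR n + 3) * B * (M * w ^ 3) <= al * c / 2 * (M * w ^ 3))
    by (apply Rmult_le_compat_r; lra).
  unfold M, w in *; lra.
Qed.

Lemma Fstep_growth_bounds al n X B c h :
  1 <= al -> 0 <= X -> 0 <= B -> 0 < c -> INR (n + 3) * B <= al * c / 2 ->
  growth_bounds n X B c h ->
  growth_bounds (n + 3) (al * X) ((3 * INR n + 11) * B) (c / 2) (Fstep al h).
Proof.
  intros Hal HX HB Hc Hcond Hh; pose proof Hh as (Hcoef & Hlen & _).
  split; [|split].
  - apply coef_bound_Fstep; auto; lra.
  - apply length_Fstep, Hlen.
  - apply (Fstep_lower_bound _ _ _ B); auto; lra.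
Qed.

Lemma Fpoly_growth_bounds j : exists A B c, 1 <= A /\ 0 <= B /\ 0 < c /\
  forall al, A <= al -> growth_bounds (3 * j + 1) (al ^ j) B c (Fpoly al j).
Proof.
  induction j as [|j (A & B & c & HA & HB & Hc & IH)].
  - exists 1, 2, 2; split; [lra|split; [lra|split; [lra|]]].
    intros al _; split; [|split]; simpl.
    + repeat apply List.Forall_cons; try apply List.Forall_nil; rewrite Rabs_right; lra.
    + lia.
    + intros u Hu; lra.
  - set (n := (3 * j + 1)%nat).
    exists (Rmax A (2 * INR (n + 3) * B / c)), ((3 * INR n + 11) * B), (c / 2).
    split; [apply (Rle_trans _ _ _ HA), Rmax_l|].
    split; [pose proof (pos_INR n); nra|split; [lra|]].
    intros al Hal.
    pose proof (Rle_trans _ _ _ (Rmax_l _ _) Hal) as HAal.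
    pose proof (Rle_trans _ _ _ (Rmax_r _ _) Hal) as Hcond.
    replace (3 * S j + 1)%nat with (n + 3)%nat by (unfold n; lia).
    apply Fstep_growth_bounds; auto; [lra|apply pow_le; lra|].
    apply (Rmult_le_compat_r (c / 2)) in Hcond; [|lra].
    replace (2 * INR (n + 3) * B / c * (c / 2)) with (INR (n + 3) * B) in Hcond by (field; lra).
    lra.
Qed.

Lemma Fpoly_pos j : exists A, 0 < A /\
  forall al u, A <= al -> 0 <= u -> 0 < peval (Fpoly al j) u.
Proof.
  destruct (Fpoly_growth_bounds j) as (A & B & c & HA & _ & Hc & Hgrowth).
  exists A; split; [lra|]; intros al u Hal Hu.
  destruct (Hgrowth al Hal) as (_ & _ & Hlow).
  eapply Rlt_le_trans; [|exact (Hlow u Hu)].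
  apply Rmult_lt_0_compat; [apply Rmult_lt_0_compat|]; auto; apply pow_lt; lra.
Qed.

Lemma cos_half_pi_neq0 t : 0 < t < 1 -> cos (PI / 2 * t) <> 0.
Proof.
  intros Ht; pose proof PI_RGT_0.
  apply Rgt_not_eq, cos_gt_0; nra.
Qed.

Lemma is_derive_tan_half_pi t : 0 < t < 1 ->
  is_derive (fun s => tan (PI / 2 * s)) t (PI / 2 * (1 + tan (PI / 2 * t) ^ 2)).
Proof.
  intros Ht; pose proof (is_derive_tan _ (cos_half_pi_neq0 t Ht)) as Dtan.
  auto_derive; [eexists; exact Dtan|].
  replace (Derive (fun x => tan x) (PI / 2 * t)) with (tan (PI / 2 * t) ^ 2 + 1)
    by (symmetry; apply is_derive_unique, Dtan).
  ring.
Qed.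

Definition weighted_peval (al : R) (h : list R) (t : R) : R :=
  exp (- al * (1 + tan (PI / 2 * t)) ^ 2) * (1 + tan (PI / 2 * t) ^ 2) * peval h (tan (PI / 2 * t)).

Lemma is_derive_weighted_peval al h t : 0 < t < 1 ->
  is_derive (weighted_peval al h) t (- (PI / 2) * weighted_peval al (Fstep al h) t).
Proof.
  intros Ht.
  pose proof (is_derive_comp _ _ t _ _
    (is_derive_Fstep al h (tan (PI / 2 * t))) (is_derive_tan_half_pi t Ht)) as D.
  unfold weighted_peval.
  replace (- (PI / 2) * _) with (PI / 2 * (1 + tan (PI / 2 * t) ^ 2)
    * - (exp (- al * (1 + tan (PI / 2 * t)) ^ 2) * peval (Fstep al h) (tan (PI / 2 * t))))
    by ring.
  exact D.
Qed.

Lemma is_derive_Fpoly_0 al u :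
  is_derive (fun v => exp (- al * (1 + v) ^ 2)) u
    (- al * (exp (- al * (1 + u) ^ 2) * peval (Fpoly al 0) u)).
Proof. auto_derive; [exact I|]. simpl; ring. Qed.

Lemma locally_unit_interval (P : R -> Prop) t :
  0 < t < 1 -> (forall y, 0 < y < 1 -> P y) -> locally t P.
Proof.
  intros Ht HP; apply (locally_interval _ t 0 1); simpl; try lra.
  intros y H0 H1; apply HP; lra.
Qed.

Lemma Derive_n_exp_tan al j t : 0 < t < 1 ->
  Derive_n (fun s => exp (- al * (1 + tan (PI / 2 * s)) ^ 2)) (S j) t
  = (- (PI / 2)) ^ S j * al * weighted_peval al (Fpoly al j) t.
Proof.
  revert t; induction j as [|j IH]; intros t Ht; apply is_derive_unique.
  - pose proof (is_derive_comp _ _ t _ _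
      (is_derive_Fpoly_0 al (tan (PI / 2 * t))) (is_derive_tan_half_pi t Ht)) as D.
    unfold weighted_peval; replace (_ * _ * _) with (PI / 2 * (1 + tan (PI / 2 * t) ^ 2)
      * (- al * (exp (- al * (1 + tan (PI / 2 * t)) ^ 2) * peval (Fpoly al 0) (tan (PI / 2 * t)))))
      by ring.
    exact D.
  - apply (is_derive_ext_loc (fun s => (- (PI / 2)) ^ S j * al * weighted_peval al (Fpoly al j) s)).
    + apply locally_unit_interval; [exact Ht|]; intros y Hy; symmetry; apply IH, Hy.
    + replace ((- (PI / 2)) ^ S (S j) * al * weighted_peval al (Fpoly al (S j)) t)
        with ((- (PI / 2)) ^ S j * al * (- (PI / 2) * weighted_peval al (Fstep al (Fpoly al j)) t))
        by (simpl; ring).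
      apply is_derive_scal, is_derive_weighted_peval, Ht.
Qed.

Lemma Derive_n_phi_sqrt al j t : 0 < t < 1 ->
  Derive_n (fun s => phi al (sqrt s)) (S j) t
  = (- (PI / 2)) ^ S j * al * weighted_peval al (Fpoly al j) t.
Proof.
  intros Ht; rewrite <- (Derive_n_exp_tan al j t Ht).
  apply Derive_n_ext_loc, locally_unit_interval; [exact Ht|]; intros y Hy.
  assert (sqrt y < 1) by (rewrite <- sqrt_1; apply sqrt_lt_1_alt; lra).
  unfold phi; destruct (Rlt_dec (sqrt y) 1); [|lra].
  rewrite pow2_sqrt by lra; reflexivity.
Qed.

Lemma derivative_formula_unique al j (P : R -> R) : 0 < al ->
  (forall t, 0 < t < 1 ->
     Derive_n (fun s => phi al (sqrt s)) (S j) t =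
       exp (- al * (1 + tan (PI / 2 * t)) ^ 2) * (-1) ^ S j * al * (PI / 2) ^ S j
       * (1 + tan (PI / 2 * t) ^ 2) * P (tan (PI / 2 * t))) ->
  forall v, 0 < v -> P v = peval (Fpoly al j) v.
Proof.
  intros Hal HP v Hv; pose proof PI_RGT_0.
  assert (Hatan : 0 < atan v < PI / 2)
    by (split; [rewrite <- atan_0; apply atan_increasing, Hv|apply atan_bound]).
  set (t := atan v / (PI / 2)).
  assert (Ht : 0 < t < 1).
  { unfold t; split; [apply Rdiv_lt_0_compat; lra|].
    apply Rmult_lt_reg_r with (PI / 2); [lra|]; field_simplify; lra. }
  assert (Htan : tan (PI / 2 * t) = v) by (unfold t; rewrite <- tan_atan; f_equal; field; lra).
  pose proof (HP t Ht) as E; rewrite Derive_n_phi_sqrt, Htan in E by exact Ht.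
  unfold weighted_peval in E; rewrite Htan in E.
  replace (- (PI / 2)) with (-1 * (PI / 2)) in E by ring; rewrite Rpow_mult_distr in E.
  assert (0 < exp (- al * (1 + v) ^ 2)) by apply exp_pos.
  assert ((-1) ^ S j <> 0) by (apply pow_nonzero; lra).
  assert (0 < (PI / 2) ^ S j) by (apply pow_lt; lra).
  assert (0 < 1 + v ^ 2) by nra.
  apply (Rmult_eq_reg_l (exp (- al * (1 + v) ^ 2) * (-1) ^ S j * al * (PI / 2) ^ S j * (1 + v ^ 2))).
  - rewrite <- E; ring.
  - apply Rmult_integral_contrapositive_currified; [|apply Rgt_not_eq; lra].
    apply Rmult_integral_contrapositive_currified; [|apply Rgt_not_eq; lra].
    apply Rmult_integral_contrapositive_currified; [|apply Rgt_not_eq; lra].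
    apply Rmult_integral_contrapositive_currified; [apply Rgt_not_eq; lra|assumption].
Qed.

Lemma continuity_pt_poly2_eval d c al u : continuity_pt (poly2_eval d c al) u.
Proof.
  apply continuity_pt_finite_SF; intros k _.
  apply continuity_pt_finite_SF; intros l _.
  reg.
Qed.

Lemma nonneg_of_pos_right (f : R -> R) :
  continuity_pt f 0 -> (forall v, 0 < v -> 0 < f v) -> forall u, 0 <= u -> 0 <= f u.
Proof.
  intros Hf Hpos u [Hu|<-]; [left; apply Hpos, Hu|].
  apply (filterlim_le (F := at_right 0) (fun _ => 0) f 0 (f 0)).
  - exists (mkposreal 1 Rlt_0_1); intros v _ Hv; left; apply Hpos, Hv.
  - apply filterlim_const.
  - eapply filterlim_filter_le_1; [|apply continuity_pt_filterlim, Hf].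
    intros P [e He]; exists e; intros v Hv _; apply He, Hv.
Qed.

Theorem lemma2p1 (d : nat -> nat) (c : nat -> nat -> nat -> Z)
  (HF : forall (j : nat) (alpha t : R), (1 <= j)%nat -> 0 < alpha -> 0 < t < 1 ->
     Derive_n (fun s => phi alpha (sqrt s)) j t =
       exp (- alpha * (1 + tan (PI / 2 * t)) ^ 2) * (-1) ^ j * alpha * (PI / 2) ^ j
       * (1 + (tan (PI / 2 * t)) ^ 2) * poly2_eval (d j) (c j) alpha (tan (PI / 2 * t))) :
  forall j : nat, (1 <= j)%nat ->
    exists alphaj : R, 0 < alphaj /\
      forall alpha u : R, alphaj <= alpha -> 0 <= u -> 0 <= poly2_eval (d j) (c j) alpha u.
Proof.
  intros [|j] Hj; [lia|].
  destruct (Fpoly_pos j) as (A & HA & Hpos).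
  exists A; split; [exact HA|]; intros al u Hal.
  apply nonneg_of_pos_right; [apply continuity_pt_poly2_eval|]; intros v Hv.
  rewrite (derivative_formula_unique al j (poly2_eval (d (S j)) (c (S j)) al)); try lra.
  - apply Hpos; lra.
  - intros t Ht; apply HF; auto; lra.
Qed.
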